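(* Let $n\ge 27$ and let $\mathcal{X},\mathcal{Y}$ be finite alphabets with $|\mathcal{X}|,|\mathcal{Y}|\ge 2$. For any real $\epsilon\in\left(\frac{4|\mathcal{X}||\mathcal{Y}|}{n}\log_2 n,1\right)$ there exists a subset $\tilde{\mathcal{P}}\subseteq\mathcal{P}(\mathcal{Y}|\mathcal{X})$ with $$|\tilde{\mathcal{P}}|\le\left(|\mathcal{Y}|\left(1+\left\lfloor\frac{4|\mathcal{Y}|^2}{\epsilon}\right\rfloor\right)\right)^{|\mathcal{X}||\mathcal{Y}|}$$ with the following property. Let $M$ be a discrete random variable, $\mathbf{X}$ a random vector on $\mathcal{X}^n$, and $(\mathbf{Y}_w)_{w\in\mathcal{P}(\mathcal{Y}|\mathcal{X})}$ random vectors on $\mathcal{Y}^n$ such that $M,\mathbf{X},(\mathbf{Y}_w)_w$ form a Markov chain in that order and $\mathbf{Y}_w$ given $\mathbf{X}$ is distributed according to $w^n(\mathbf{y}|\mathbf{x})=\prod_{t=1}^n w(y_t|x_t)$. Then for each $w\in\mathcal{P}(\mathcal{Y}|\mathcal{X})$ there exists $\tilde w_w\in\tilde{\mathcal{P}}$ such that if $$\Pr\left(|h(\mathbf{Y}_{\tilde w_w}|M)-\mathbb{H}(\mathbf{Y}_{\tilde w_w}|M)|>n\delta\right)<2^{-n\alpha}$$ for some $\delta,\alpha>0$, then $$\Pr\left(|h(\mathbf{Y}_w|M)-\mathbb{H}(\mathbf{Y}_w|M)|>n\tilde\delta\right)<2^{-n\epsilon}+2^{-n(\alpha-\epsilon)},$$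 where $$\tilde\delta=(2+2^{-n\epsilon}+2^{-n(\alpha-\epsilon)})(\delta+\epsilon)+(2^{-n\epsilon}+2^{-n(\alpha-\epsilon)})\left[\log_2|\mathcal{Y}|-\frac2n\log_2(2^{-n\epsilon}+2^{-n(\alpha-\epsilon)})\right].$$
   Context: $\mathcal{P}(\mathcal{Y}|\mathcal{X})$ is the set of all conditional distributions $w(y|x)$, $y\in\mathcal{Y}$, $x\in\mathcal{X}$. $h(\mathbf{Y}_w|M)$ denotes the random variable $-\log_2 p_{\mathbf{Y}_w|M}(\mathbf{Y}_w|M)$ and $\mathbb{H}(\mathbf{Y}_w|M)$ the conditional entropy. *)

From HB Require Import structures.
From mathcomp Require Import all_boot all_order all_algebra.
From mathcomp Require Import all_classical all_reals all_analysis.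
Set Implicit Arguments. Unset Strict Implicit. Unset Printing Implicit Defensive.
Import Order.TTheory GRing.Theory Num.Theory.
Local Open Scope classical_set_scope.
Local Open Scope ring_scope.

Section Defs.
Variable R : realType.

Definition log2 (x : R) : R := ln x / ln 2.
Definition pow2 (x : R) : R := powR 2 x.

Variables (X Y : finType) (n : nat).

Definition is_channel (w : X -> Y -> R) : Prop :=
  (forall x y, 0 <= w x y) /\ (forall x, \sum_(y : Y) w x y = 1).

Definition chan_n (w : X -> Y -> R) (x : {ffun 'I_n -> X})
  (y : {ffun 'I_n -> Y}) : R := \prod_(t < n) w (x t) (y t).

Variable (TM : countType).

Definition is_joint_pmf (p : TM -> {ffun 'I_n -> X} -> R) : Prop :=
  (forall m x, 0 <= p m x) /\
  (\esum_(mx in [set: TM * {ffun 'I_n -> X}]) (p mx.1 mx.2)%:E = 1%E).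

Variable (p : TM -> {ffun 'I_n -> X} -> R) (w : X -> Y -> R).

(* joint pmf of (M, Y_w) for the Markov chain M - X - Y_w with Y_w|X ~ w^n *)
Definition pMY (m : TM) (y : {ffun 'I_n -> Y}) : R :=
  \sum_(x : {ffun 'I_n -> X}) p m x * chan_n w x y.

Definition pM (m : TM) : R := \sum_(x : {ffun 'I_n -> X}) p m x.

Definition cond_info (m : TM) (y : {ffun 'I_n -> Y}) : R :=
  - log2 (pMY m y / pM m).

Definition cond_entropy : \bar R :=
  \esum_(my in [set: TM * {ffun 'I_n -> Y}])
     (pMY my.1 my.2 * cond_info my.1 my.2)%:E.

Definition prob_dev (t : R) : \bar R :=
  \esum_(my in [set my : TM * {ffun 'I_n -> Y} |
            (`| (cond_info my.1 my.2)%:E - cond_entropy | > t%:E)%E])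
     (pMY my.1 my.2)%:E.

End Defs.

(* Quantizing every w(y|x) to K = floor(4|Y|^2/eps) levels (add-one smoothed) gives
   a finite family of channels wt with w <= 2^eps wt pointwise, hence
   P_{M,Y_w} <= 2^(n eps) P_{M,Y_wt}.  Let A be the event where h(Y_wt|M) deviates
   from its mean by more than n delta, and B the event where P_{M,Y_w} is not both
   positive and at least 2^(-n eps) P_{M,Y_wt}.  Then
   P_{M,Y_w}(A u B) < 2^(n eps) 2^(-n alpha) + 2^(-n eps), and off A u B the
   information densities of w and wt are within n eps of each other.  The log-sum
   inequality bounds the share of H(Y_w|M) carried by the small set A u B, so the two
   conditional entropies are close as well, and the triangle inequality transfers the
   concentration of h(Y_wt|M) to h(Y_w|M). *)

From HB Require Import structures.
From mathcomp Require Import all_boot all_order all_algebra.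
From mathcomp Require Import all_classical all_reals all_analysis.
From mathcomp Require Import ring lra.
Set Implicit Arguments. Unset Strict Implicit. Unset Printing Implicit Defensive.
Import Order.TTheory GRing.Theory Num.Theory.
Local Open Scope classical_set_scope.
Local Open Scope ring_scope.

Section esum_nonneg.
Variables (R : realType) (T : choiceType).
Implicit Types (S A B : set T) (f : T -> \bar R).

Lemma esumZl S c f : 0 <= c -> (forall i, (0 <= f i)%E) ->
  \esum_(i in S) (c%:E * f i)%E = (c%:E * \esum_(i in S) f i)%E.
Proof.
move=> c0 f0; rewrite /esum -ereal_supZl //; last first.
  by apply/set0P; exists 0%E, set0; [exact: fsets_set0 | rewrite fsbig_set0].
congr ereal_sup; apply/seteqP; split => x.
  by case=> A SA <-; exists (\sum_(i \in A) f i)%E; [exists A | rewrite ge0_mule_fsumr].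
by case=> _ [A SA <-] <-; exists A => //; rewrite ge0_mule_fsumr.
Qed.

Lemma le_esum_subset A B f : A `<=` B -> (forall i, (0 <= f i)%E) ->
  (\esum_(i in A) f i <= \esum_(i in B) f i)%E.
Proof.
move=> AB f0; rewrite esum_mkcond [leRHS]esum_mkcond.
apply: le_esum => i _; case: ifPn => [|_]; last by case: ifP.
by rewrite !inE => /AB /mem_set ->.
Qed.

Lemma esum_setU_le A B f : (forall i, (0 <= f i)%E) ->
  (\esum_(i in A `|` B) f i <= \esum_(i in A) f i + \esum_(i in B) f i)%E.
Proof.
move=> f0; rewrite (esum_mkcond (A `|` B)) (esum_mkcond A) (esum_mkcond B).
have mk0 (D : set T) i : (0 <= if i \in D then f i else 0)%E by case: ifP.
rewrite -esumD //; apply: le_esum => i _.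
case: ifPn => [|_]; last exact: adde_ge0.
rewrite inE => -[/mem_set ->|/mem_set ->]; first exact: leeDl.
exact: leeDr.
Qed.

End esum_nonneg.

Lemma ge0_le_fin_num (R : realDomainType) (x : \bar R) (c : R) :
  (0 <= x)%E -> (x <= c%:E)%E -> x \is a fin_num.
Proof. by move=> x0 xc; rewrite ge0_fin_numE // (le_lt_trans xc (ltry c)). Qed.

Lemma fsbig_setT_finType (R : nmodType) (F : finType) (f : F -> R) :
  \sum_(i \in [set: F]) f i = \sum_(i : F) f i.
Proof.
rewrite (fsbigE (enum F)) ?enum_uniq //; last by move=> i _; rewrite mem_enum.
by rewrite big_enum_cond /=; apply: eq_bigl => i; rewrite in_setT.
Qed.

Lemma esum_setT_prod (R : realType) (T : choiceType) (F : finType)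
    (f : T -> F -> R) : (forall t y, 0 <= f t y) ->
  \esum_(i in [set: T * F]) (f i.1 i.2)%:E =
  \esum_(t in [set: T]) (\sum_(y : F) f t y)%:E.
Proof.
move=> f0; have -> : [set: T * F] = [set: T] `*`` (fun=> [set: F]).
  by apply/seteqP; split.
rewrite -(@esum_esum _ _ _ _ _ (fun t y => (f t y)%:E)); last first.
  by move=> *; rewrite lee_fin.
have finF : finite_set [set: F] by exact: finite_finset.
apply: eq_esum => t _; rewrite esum_fset // ?fsumEFin ?fsbig_setT_finType //.
by move=> *; rewrite lee_fin.
Qed.

Section real_facts.
Variable R : realType.

Lemma ln_le_subr1 (x : R) : 0 < x -> ln x <= x - 1.
Proof. by move=> x0; have := expR_ge1Dx (ln x); rewrite lnK ?posrE // lerBrDl. Qed.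

Lemma ln2_gt0 : 0 < ln (2 : R).
Proof. by rewrite ln_gt0 // ltr1n. Qed.

Lemma invf_ln2_le2 : (ln (2 : R))^-1 <= 2.
Proof.
have ln_half : - ln 2 <= 2^-1 - 1 :> R by rewrite -lnV ?posrE // ln_le_subr1.
by rewrite invf_ple ?posrE ?ln2_gt0 //; lra.
Qed.

Lemma pow2_ge1Dx (e : R) : 1 + e * ln 2 <= pow2 e.
Proof. by rewrite /pow2 /powR pnatr_eq0 expR_ge1Dx. Qed.

Lemma pow2_gt0 (e : R) : 0 < pow2 e.
Proof. exact: powR_gt0. Qed.

Lemma log2_ge0 (x : R) : 1 <= x -> 0 <= log2 x.
Proof. by move=> x1; apply: divr_ge0; [exact: ln_ge0 | exact: ltW ln2_gt0]. Qed.

Lemma log2_le0 (x : R) : x <= 1 -> log2 x <= 0.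
Proof. by move=> x1; rewrite /log2 pmulr_lle0 ?invr_gt0 ?ln2_gt0 ?ln_le0. Qed.

Lemma log2_pow2 (e : R) : log2 (pow2 e) = e.
Proof. by rewrite /log2 /pow2 ln_powR mulfK // gt_eqF // ln2_gt0. Qed.

Lemma log2_div_norm_le (a b e : R) : 0 < a -> 0 < b ->
  a <= pow2 e * b -> b <= pow2 e * a -> `|log2 (a / b)| <= e.
Proof.
move=> a_gt0 b_gt0 ab ba.
have log2_le x : 0 < x -> x <= pow2 e -> log2 x <= e.
  move=> x_gt0 xe; rewrite -[leRHS]log2_pow2 /log2 ler_pM2r ?invr_gt0 ?ln2_gt0 //.
  by rewrite ler_ln ?posrE ?pow2_gt0.
have log2_divN : log2 (b / a) = - log2 (a / b).
  by rewrite /log2 !ln_div ?posrE // -mulNr opprB.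
by rewrite ler_norml lerNl -log2_divN !log2_le ?divr_gt0 ?ler_pdivrMr.
Qed.

End real_facts.

Section channel.
Variables (R : realType) (X Y : finType) (w : X -> Y -> R).
Hypothesis hw : is_channel w.

Lemma channel_le1 x y : w x y <= 1.
Proof.
have [w_ge0 sum_w] := hw; rewrite -(sum_w x) (bigD1 y) //= lerDl.
exact: sumr_ge0.
Qed.

Lemma chan_n_ge0 n x y : 0 <= @chan_n R X Y n w x y.
Proof. by apply: prodr_ge0 => t _; case: hw. Qed.

Lemma chan_n_le1 n x y : @chan_n R X Y n w x y <= 1.
Proof. by apply: prodr_ile1 => t _; rewrite channel_le1 andbT; case: hw. Qed.

Lemma sum_chan_n n x : \sum_y @chan_n R X Y n w x y = 1.
Proof.
rewrite /chan_n -(bigA_distr_bigA (fun t y => w (x t) y)) /=.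
by apply: big1 => t _; case: hw.
Qed.

Lemma chan_n_le_pow2 (wt : X -> Y -> R) (e : R) n x y :
  (forall x y, w x y <= pow2 e * wt x y) ->
  @chan_n R X Y n w x y <= pow2 (n%:R * e) * chan_n wt x y.
Proof.
move=> w_le; have -> : pow2 (n%:R * e) * chan_n wt x y =
    \prod_(t < n) (pow2 e * wt (x t) (y t)).
  rewrite big_split prodr_const card_ord /pow2.
  by rewrite -powR_mulrn ?powR_ge0 // -powRrM (mulrC e).
by rewrite /chan_n; apply: ler_prod => t _; rewrite w_le andbT; case: hw.
Qed.

End channel.

Section joint_pmf.
Variables (R : realType) (X Y : finType) (n : nat) (TM : countType).
Variable p : TM -> {ffun 'I_n -> X} -> R.
Hypothesis hp : is_joint_pmf p.
Hypothesis Y_gt0 : (0 < #|Y|)%N.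
Local Notation F := {ffun 'I_n -> Y}.
Local Notation NY := (#|F|%:R : R).

Lemma joint_pmf_ge0 m x : 0 <= p m x. Proof. by case: hp. Qed.

Lemma pM_ge0 m : 0 <= pM p m.
Proof. by apply: sumr_ge0 => x _; exact: joint_pmf_ge0. Qed.

Lemma esum_pM : \esum_(m in [set: TM]) (pM p m)%:E = 1%E.
Proof. by case: hp => _; rewrite esum_setT_prod //; exact: joint_pmf_ge0. Qed.

Lemma esum_pM_setT : \esum_(i in [set: TM * F]) (pM p i.1)%:E = NY%:E.
Proof.
rewrite (esum_setT_prod (fun m (_ : F) => pM_ge0 m)).
under eq_esum do rewrite sumr_const -mulr_natl EFinM.
by rewrite esumZl ?esum_pM ?mule1 // => m; rewrite lee_fin pM_ge0.
Qed.

Definition Pr (w : X -> Y -> R) (E : set (TM * F)) : R :=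
  fine (\esum_(i in E) (pMY p w i.1 i.2)%:E).

Definition Hpart (w : X -> Y -> R) (E : set (TM * F)) : R :=
  fine (\esum_(i in E) (pMY p w i.1 i.2 * cond_info p w i.1 i.2)%:E).

Section output.
Variable w : X -> Y -> R.
Hypothesis hw : is_channel w.
Implicit Types (E : set (TM * F)) (m : TM) (y : F).

Lemma pMY_ge0 m y : 0 <= pMY p w m y.
Proof. by apply: sumr_ge0 => x _; rewrite mulr_ge0 ?joint_pmf_ge0 ?chan_n_ge0. Qed.

Lemma pMY_le_pM m y : pMY p w m y <= pM p m.
Proof. by apply: ler_sum => x _; rewrite ler_piMr ?joint_pmf_ge0 ?chan_n_le1. Qed.

Lemma sum_pMY m : \sum_y pMY p w m y = pM p m.
Proof.
rewrite /pMY exchange_big; apply: eq_bigr => x _.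
by rewrite -mulr_sumr sum_chan_n ?mulr1.
Qed.

Lemma esum_pMY : \esum_(i in [set: TM * F]) (pMY p w i.1 i.2)%:E = 1%E.
Proof.
rewrite (esum_setT_prod pMY_ge0) -esum_pM.
by apply: eq_esum => m _; rewrite sum_pMY.
Qed.

Lemma cond_info_ge0 m y : 0 <= cond_info p w m y.
Proof.
rewrite /cond_info oppr_ge0 log2_le0 //.
have [->|pM_neq0] := eqVneq (pM p m) 0; first by rewrite invr0 mulr0.
by rewrite ler_pdivrMr ?mul1r ?pMY_le_pM // lt_neqAle eq_sym pM_neq0 pM_ge0.
Qed.

Let pMY_ge0E i : (0 <= (pMY p w i.1 i.2)%:E)%E.
Proof. by rewrite lee_fin pMY_ge0. Qed.

Let pMY_cond_info_ge0E i :
  (0 <= (pMY p w i.1 i.2 * cond_info p w i.1 i.2)%:E)%E.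
Proof. by rewrite lee_fin mulr_ge0 ?pMY_ge0 ?cond_info_ge0. Qed.

Lemma esum_pMY_le1 E : (\esum_(i in E) (pMY p w i.1 i.2)%:E <= 1)%E.
Proof. by rewrite -esum_pMY; exact: le_esum_subset. Qed.

Lemma PrE E : \esum_(i in E) (pMY p w i.1 i.2)%:E = (Pr w E)%:E.
Proof.
by rewrite fineK // (ge0_le_fin_num _ (esum_pMY_le1 E)) // esum_ge0.
Qed.

Lemma Pr_ge0 E : 0 <= Pr w E.
Proof. by rewrite -lee_fin -PrE esum_ge0. Qed.

Lemma Pr_le1 E : Pr w E <= 1.
Proof. by rewrite -lee_fin -PrE esum_pMY_le1. Qed.

Lemma Pr_le_subset E1 E2 : E1 `<=` E2 -> Pr w E1 <= Pr w E2.
Proof. by move=> sub; rewrite -lee_fin -!PrE le_esum_subset. Qed.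

Lemma Pr_setU_le E1 E2 : Pr w (E1 `|` E2) <= Pr w E1 + Pr w E2.
Proof. by rewrite -lee_fin EFinD -!PrE esum_setU_le. Qed.

Lemma Pr_setC E : Pr w E + Pr w (~` E) = 1.
Proof.
apply: EFin_inj; rewrite EFinD -!PrE -esum_pMY (esumID E setT) //.
by rewrite !setTI.
Qed.

Let NY_gt0 : 0 < NY.
Proof. by rewrite ltr0n card_ffun card_ord expn_gt0 Y_gt0. Qed.

Let NY_ge1 : 1 <= NY.
Proof. by rewrite ler1n -(ltr0n R). Qed.

(* The pointwise step of the log-sum inequality: [ln u <= u - 1] at
   [u = r pM / (NY pMY)]. *)
Lemma pMY_cond_info_le (r : R) m y : 0 < r ->
  pMY p w m y * cond_info p w m y + pMY p w m y / ln 2 <=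
  pMY p w m y * log2 (NY / r) + r / NY * pM p m / ln 2.
Proof.
move=> r_gt0; have ln2_gt0 := @ln2_gt0 R.
have [P0|P_gt0] := eqVneq (pMY p w m y) 0.
  by rewrite P0 !mul0r !add0r divr_ge0 ?mulr_ge0 ?divr_ge0 ?pM_ge0 // ltW.
have {P_gt0}P_gt0 : 0 < pMY p w m y by rewrite lt_neqAle eq_sym P_gt0 pMY_ge0.
have M_gt0 : 0 < pM p m by exact: lt_le_trans P_gt0 (pMY_le_pM _ _).
set P := pMY p w m y in P_gt0 *; set M := pM p m in M_gt0 *.
have u_gt0 : 0 < M * r / (P * NY) by rewrite divr_gt0 ?mulr_gt0.
have := ln_le_subr1 u_gt0.
rewrite ln_div ?posrE ?mulr_gt0 // !lnM ?posrE // => ln_u.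
rewrite /cond_info /log2 !ln_div ?posrE // -subr_ge0.
have -> : P * ((ln NY - ln r) / ln 2) + r / NY * M / ln 2 -
    (P * - ((ln P - ln M) / ln 2) + P / ln 2) =
    (P * (M * r / (P * NY) - 1) - P * (ln M + ln r - (ln P + ln NY))) / ln 2.
  by field; rewrite !gt_eqF.
by rewrite divr_ge0 ?subr_ge0 ?ler_pM2l // ltW.
Qed.

Lemma esum_cond_info_le E (r : R) : 0 < r -> r <= NY ->
  (\esum_(i in E) (pMY p w i.1 i.2 * cond_info p w i.1 i.2)%:E <=
   (Pr w E * log2 (NY / r) + (r - Pr w E) / ln 2)%:E)%E.
Proof.
move=> r_gt0 r_le; have ln2_gt0 := @ln2_gt0 R.
have c_ge0 : 0 <= r / NY / ln 2 by rewrite !divr_ge0 ?ltW.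
have log_ge0 : 0 <= log2 (NY / r) by rewrite log2_ge0 // ler_pdivlMr // mul1r.
have sumP_ln2 : \esum_(i in E) (pMY p w i.1 i.2 / ln 2)%:E = (Pr w E / ln 2)%:E.
  under eq_esum do rewrite mulrC EFinM.
  by rewrite esumZl ?PrE ?invr_ge0 ?ltW // -EFinM mulrC.
have sumP_log : \esum_(i in E) (log2 (NY / r) * pMY p w i.1 i.2)%:E =
    (Pr w E * log2 (NY / r))%:E.
  under eq_esum do rewrite EFinM.
  by rewrite esumZl ?PrE // -EFinM mulrC.
have sumM : (\esum_(i in E) (r / NY / ln 2 * pM p i.1)%:E <= (r / ln 2)%:E)%E.
  under eq_esum do rewrite EFinM.
  rewrite esumZl // => [|i]; last by rewrite lee_fin pM_ge0.
  apply: (@le_trans _ _ ((r / NY / ln 2)%:E * NY%:E)%E).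
    rewrite lee_wpmul2l ?lee_fin // -esum_pM_setT.
    by apply: le_esum_subset => // i; rewrite lee_fin pM_ge0.
  by rewrite -EFinM lee_fin mulrAC divfK ?gt_eqF.
rewrite mulrBl addrA EFinB leeBrDr // EFinD.
apply: le_trans (leeD (lexx _) sumM); rewrite -sumP_ln2 -sumP_log -!esumD //.
  apply: le_esum => i _; rewrite -!EFinD lee_fin.
  by rewrite (mulrC (log2 _)) mulrAC pMY_cond_info_le.
- by move=> i _; rewrite lee_fin mulr_ge0 ?pMY_ge0.
- by move=> i _; rewrite lee_fin mulr_ge0 ?pM_ge0.
- by move=> i _; rewrite lee_fin divr_ge0 ?pMY_ge0 ?ltW.
Qed.

Lemma HpartE E : \esum_(i in E) (pMY p w i.1 i.2 * cond_info p w i.1 i.2)%:E =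
  (Hpart w E)%:E.
Proof.
by rewrite fineK // (ge0_le_fin_num _ (esum_cond_info_le E ltr01 NY_ge1)) ?esum_ge0.
Qed.

Lemma Hpart_le E (r : R) : 0 < r -> r <= NY ->
  Hpart w E <= Pr w E * log2 (NY / r) + (r - Pr w E) / ln 2.
Proof. by move=> r_gt0 r_le; rewrite -lee_fin -HpartE esum_cond_info_le. Qed.

Lemma Hpart_ge0 E : 0 <= Hpart w E.
Proof. by rewrite -lee_fin -HpartE esum_ge0. Qed.

Lemma Hpart_le_mulPr E b : (forall i, E i -> cond_info p w i.1 i.2 <= b) ->
  0 <= b -> Hpart w E <= b * Pr w E.
Proof.
move=> h_le b_ge0; rewrite -lee_fin -HpartE EFinM -PrE -esumZl //.
by apply: le_esum => i Ei; rewrite -EFinM lee_fin [leRHS]mulrC ler_wpM2l ?pMY_ge0 ?h_le.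
Qed.

Lemma Hpart_ge_mulPr E b : (forall i, E i -> b <= cond_info p w i.1 i.2) ->
  0 <= b -> b * Pr w E <= Hpart w E.
Proof.
move=> h_ge b_ge0; rewrite -lee_fin -HpartE EFinM -PrE -esumZl //.
by apply: le_esum => i Ei; rewrite -EFinM lee_fin [leLHS]mulrC ler_wpM2l ?pMY_ge0 ?h_ge.
Qed.

Lemma Hpart_setC E : Hpart w E + Hpart w (~` E) = Hpart w setT.
Proof.
by apply: EFin_inj; rewrite EFinD -!HpartE (esumID E setT) // !setTI.
Qed.

Lemma cond_entropyE : cond_entropy p w = (Hpart w setT)%:E.
Proof. exact: HpartE. Qed.

Lemma prob_devE t : prob_dev p w t =
  (Pr w [set i | t < `|cond_info p w i.1 i.2 - Hpart w setT|])%:E.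
Proof.
by rewrite -PrE /prob_dev cond_entropyE.
Qed.

Lemma Hpart_setT_le : Hpart w setT <= log2 NY.
Proof.
have := Hpart_le setT ltr01 NY_ge1.
have PrT : Pr w setT = 1 by apply: EFin_inj; rewrite -PrE esum_pMY.
by rewrite PrT divr1 subrr mul0r addr0 mul1r.
Qed.

Section entropy_near.
Variables (E : set (TM * F)) (Hc D s : R).
Hypotheses (Hc_ge0 : 0 <= Hc) (Hc_le : Hc <= log2 NY) (D_ge2 : 2 <= D).
Hypotheses (s_gt0 : 0 < s) (s_le1 : s <= 1) (Pr_le_s : Pr w E <= s).
Hypothesis near : forall i, ~ E i -> `|cond_info p w i.1 i.2 - Hc| <= D.

Let D_ge0 : 0 <= D. Proof. exact: le_trans D_ge2. Qed.
Let PrC : Pr w (~` E) = 1 - Pr w E. Proof. by rewrite -(Pr_setC E) addrC addKr. Qed.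

Lemma Hpart_setT_ge_near : Hc - Hpart w setT <= D + s * log2 NY.
Proof.
have HC_ge : Num.max 0 (Hc - D) * (1 - Pr w E) <= Hpart w (~` E).
  rewrite -PrC Hpart_ge_mulPr ?le_max ?lexx // => i /near.
  by rewrite ge_max cond_info_ge0 ler_norml => /andP[+ _]; lra.
have HC_ge' : (Hc - D) * (1 - Pr w E) <= Num.max 0 (Hc - D) * (1 - Pr w E).
  by rewrite ler_wpM2r ?subr_ge0 ?Pr_le1 // le_max lexx orbT.
have q_Hc_le : Pr w E * Hc <= s * log2 NY by rewrite ler_pM ?Pr_ge0.
have q_D_ge0 : 0 <= Pr w E * D by rewrite mulr_ge0 ?Pr_ge0.
have := Hpart_ge0 E; rewrite -(Hpart_setC E); lra.
Qed.

(* The mass [s] of the exceptional set [E] carries at most [s log2 (NY / s) + s D]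
   of entropy. *)
Lemma Hpart_setT_le_near : Hpart w setT - Hc <= D + s * (D + log2 NY - log2 s).
Proof.
have ln2_gt0 := @ln2_gt0 R; have q_ge0 := Pr_ge0 E.
have HE_le := Hpart_le E s_gt0 (le_trans s_le1 NY_ge1).
have HC_le : Hpart w (~` E) <= (Hc + D) * (1 - Pr w E).
  rewrite -PrC Hpart_le_mulPr ?addr_ge0 // => i /near.
  by rewrite ler_norml => /andP[_]; lra.
have HC_le' : (Hc + D) * (1 - Pr w E) <= Hc + D.
  by rewrite ler_piMr ?gerBl ?addr_ge0.
have HE_log : Pr w E * log2 (NY / s) <= s * (log2 NY - log2 s).
  have -> : log2 NY - log2 s = log2 (NY / s) by rewrite /log2 ln_div ?posrE // mulrBl.
  by apply: ler_wpM2r => //; rewrite log2_ge0 // ler_pdivlMr // mul1r (le_trans s_le1).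
have HE_rest : (s - Pr w E) / ln 2 <= s * D.
  have sq_ge0 : 0 <= s - Pr w E by rewrite subr_ge0.
  apply: (@le_trans _ _ ((s - Pr w E) * 2)); first by rewrite ler_wpM2l ?invf_ln2_le2.
  by rewrite ler_pM // gerBl.
rewrite -(Hpart_setC E); lra.
Qed.

Lemma Hpart_setT_near : `|Hpart w setT - Hc| <= D + s * (D + log2 NY - log2 s).
Proof.
have s_log2_s_le0 : s * log2 s <= 0 by rewrite mulr_ge0_le0 ?log2_le0 // ltW.
have s_D_ge0 : 0 <= s * D by rewrite mulr_ge0 // ltW.
have := Hpart_setT_ge_near; have := Hpart_setT_le_near.
rewrite ler_norml; lra.
Qed.

End entropy_near.

End output.


Section perturbation.
Variables (w wt : X -> Y -> R) (eps delta alpha : R).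
Hypotheses (hw : is_channel w) (hwt : is_channel wt) (delta_gt0 : 0 < delta).
Hypothesis w_le : forall x y, w x y <= pow2 eps * wt x y.

Let c := pow2 (n%:R * eps).
Let c_gt0 : 0 < c. Proof. exact: pow2_gt0. Qed.
Let Ht := Hpart wt setT.
Let A := [set i : TM * F | n%:R * delta < `|cond_info p wt i.1 i.2 - Ht|].
Let B := [set i : TM * F |
  ~ (0 < pMY p w i.1 i.2 /\ pMY p wt i.1 i.2 <= c * pMY p w i.1 i.2)].

Lemma pMY_le_pow2 m y : pMY p w m y <= c * pMY p wt m y.
Proof.
rewrite /pMY mulr_sumr; apply: ler_sum => x _.
by rewrite mulrCA ler_wpM2l ?joint_pmf_ge0 ?chan_n_le_pow2.
Qed.

Lemma Pr_le_pow2 E : Pr w E <= c * Pr wt E.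
Proof.
have c_ge0 : 0 <= c by exact: ltW (pow2_gt0 _).
rewrite -lee_fin EFinM -(PrE hw) -(PrE hwt) -esumZl //; last first.
  by move=> i; rewrite lee_fin (pMY_ge0 hwt).
by apply: le_esum => i _; rewrite -EFinM lee_fin pMY_le_pow2.
Qed.

Lemma Pr_B_le : Pr w B <= c^-1.
Proof.
rewrite -lee_fin -(PrE hw).
apply: (@le_trans _ _ (\esum_(i in B) (c^-1 * pMY p wt i.1 i.2)%:E)%E).
  apply: le_esum => i /= Bi; rewrite lee_fin ler_pdivlMl //.
  have [P0|P_gt0] := eqVneq (pMY p w i.1 i.2) 0.
    by rewrite P0 mulr0 (pMY_ge0 hwt).
  apply: ltW; rewrite ltNge; apply/negP => le_c; apply: Bi; split => //.
  by rewrite lt_neqAle eq_sym P_gt0 (pMY_ge0 hw).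
under eq_esum do rewrite EFinM.
have cV_ge0 : 0 <= c^-1 by rewrite invr_ge0; exact: ltW.
rewrite esumZl //; last by move=> i; rewrite lee_fin (pMY_ge0 hwt).
by rewrite (PrE hwt) -EFinM lee_fin ler_piMr ?(Pr_le1 hwt).
Qed.

Let D := n%:R * (delta + eps).

Lemma cond_info_near i : ~ A i -> ~ B i -> `|cond_info p w i.1 i.2 - Ht| <= D.
Proof.
case: i => m y /=; move=> /negP; rewrite -leNgt => near_t /contrapT[Pw_gt0 Pwt_le].
have Pwt_gt0 : 0 < pMY p wt m y.
  by rewrite -(pmulr_rgt0 _ c_gt0); exact: lt_le_trans Pw_gt0 (pMY_le_pow2 _ _).
have M_gt0 : 0 < pM p m by exact: lt_le_trans Pw_gt0 (pMY_le_pM hw _ _).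
have -> : cond_info p w m y - Ht =
    log2 (pMY p wt m y / pMY p w m y) + (cond_info p wt m y - Ht).
  by rewrite /cond_info /log2 !ln_div ?posrE ?divr_gt0 //; ring.
rewrite /D mulrDr addrC; apply: le_trans (ler_normD _ _) _; rewrite lerD //.
by rewrite log2_div_norm_le // pMY_le_pow2.
Qed.

Hypothesis dev_lt : (prob_dev p wt (n%:R * delta) < (pow2 (- (n%:R * alpha)))%:E)%E.
Hypothesis n_eps_ge2 : 2 <= n%:R * eps.

Let s := pow2 (- (n%:R * eps)) + pow2 (- (n%:R * (alpha - eps))).

Lemma Pr_bad_lt : Pr w (A `|` B) < s.
Proof.
have := dev_lt; rewrite (prob_devE hwt) lte_fin => devA.
have cV : c^-1 = pow2 (- (n%:R * eps)) by rewrite /c /pow2 powRN.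
have cA : c * pow2 (- (n%:R * alpha)) = pow2 (- (n%:R * (alpha - eps))).
  by rewrite /c /pow2 -powRD ?pnatr_eq0 ?implybT //; congr (_ `^ _); ring.
apply: le_lt_trans (Pr_setU_le hw A B) _.
rewrite /s -cV -cA [ltRHS]addrC ltr_leD ?Pr_B_le //.
by apply: le_lt_trans (Pr_le_pow2 A) _; rewrite ltr_pM2l.
Qed.

Lemma prob_dev_perturb :
  (prob_dev p w ((2 + s) * D + s * (log2 NY - 2 * log2 s)) < s%:E)%E.
Proof.
rewrite (prob_devE hw) lte_fin.
have [s_gt1|s_le1] := ltP 1 s; first exact: le_lt_trans (Pr_le1 hw _) s_gt1.
have s_gt0 : 0 < s by rewrite addr_gt0 ?pow2_gt0.
have D_ge2 : 2 <= D by rewrite /D mulrDr -[2]add0r lerD // mulr_ge0 // ltW.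
have near i : ~ (A `|` B) i -> `|cond_info p w i.1 i.2 - Ht| <= D.
  by move=> /not_orP[]; exact: cond_info_near.
have H_near := Hpart_setT_near hw (Hpart_ge0 hwt _) (Hpart_setT_le hwt) D_ge2
  s_gt0 s_le1 (ltW Pr_bad_lt) near.
have s_log2_s_le0 : s * log2 s <= 0 by rewrite mulr_ge0_le0 ?log2_le0 // ltW.
apply: le_lt_trans Pr_bad_lt; apply: (Pr_le_subset hw) => i /= dev_t.
apply: contrapT => nAB; move: dev_t; rewrite ltNge => /negP; apply.
have -> : cond_info p w i.1 i.2 - Hpart w setT =
    (cond_info p w i.1 i.2 - Ht) + (Ht - Hpart w setT) by rewrite addrA subrK.
apply: le_trans (ler_normD _ _) _; rewrite distrC in H_near.
have := near i nAB; lra.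
Qed.

End perturbation.

End joint_pmf.

Section quantization.
Variables (R : realType) (X Y : finType) (K : nat).
Implicit Types (w : X -> Y -> R) (k : {ffun X * Y -> 'I_K.+1}).

Definition quant_channel k : X -> Y -> R :=
  fun x y => ((k (x, y))%:R + 1) / \sum_y' ((k (x, y'))%:R + 1).

Lemma quant_channel_is_channel k : (0 < #|Y|)%N -> is_channel (quant_channel k).
Proof.
move=> Y_gt0; have den_gt0 x : 0 < \sum_y' (((k (x, y'))%:R : R) + 1).
  rewrite (@lt_le_trans _ _ #|Y|%:R) ?ltr0n // -sumr_const.
  by apply: ler_sum => y _; rewrite lerDr.
split=> [x y|x]; first by rewrite divr_ge0 ?addr_ge0 // ltW.
by rewrite -mulr_suml mulfV // gt_eqF.
Qed.

Definition quant_index w : {ffun X * Y -> 'I_K.+1} :=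
  [ffun xy => inord (Num.truncn (K%:R * w xy.1 xy.2))].

Lemma quant_indexE w x y : is_channel w ->
  ((quant_index w (x, y))%:R : R) = (Num.truncn (K%:R * w x y))%:R.
Proof.
move=> hw; rewrite ffunE inordK // ltnS -(ler_nat R).
have [w_ge0 _] := hw; apply: le_trans (_ : K%:R * w x y <= K%:R).
  by rewrite truncn_le mulr_ge0.
by rewrite ler_piMr // channel_le1.
Qed.

(* [K w < k + 1] and the denominator is at most [K + |Y|]. *)
Lemma channel_le_quant w (c : R) : is_channel w -> 0 <= c ->
  K%:R + #|Y|%:R <= c * K%:R ->
  forall x y, w x y <= c * quant_channel (quant_index w) x y.
Proof.
move=> hw c_ge0 K_le x y; have [w_ge0 sum_w] := hw.
set k := quant_index w; have kE y' := quant_indexE x y' hw.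
have k_le y' : ((k (x, y'))%:R : R) <= K%:R * w x y'.
  by rewrite kE truncn_le mulr_ge0.
have k_gt y' : K%:R * w x y' < (k (x, y'))%:R + 1.
  by rewrite kE natr1 truncnS_gt.
have den_le : \sum_y' (((k (x, y'))%:R : R) + 1) <= K%:R + #|Y|%:R.
  apply: le_trans (_ : \sum_y' (K%:R * w x y' + 1) <= _).
    by apply: ler_sum => y' _; rewrite lerD2r.
  by rewrite big_split /= -mulr_sumr sum_w mulr1 sumr_const.
have den_gt0 : 0 < \sum_y' (((k (x, y'))%:R : R) + 1).
  by rewrite (bigD1 y) //= ltr_pwDl ?ltr_wpDl // sumr_ge0 // => y' _; rewrite addr_ge0.
rewrite /quant_channel mulrA ler_pdivlMr //.
apply: le_trans (ler_wpM2l (w_ge0 x y) (le_trans den_le K_le)) _.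
by rewrite mulrCA ler_wpM2l // mulrC ltW.
Qed.

Definition quant_codebook : seq (X -> Y -> R) :=
  [seq quant_channel k | k <- enum {ffun X * Y -> 'I_K.+1}].

Lemma size_quant_codebook : size quant_codebook = (K.+1 ^ (#|X| * #|Y|))%N.
Proof. by rewrite size_map -cardE card_ffun card_prod card_ord. Qed.

Lemma quant_codebook_channel wt : (0 < #|Y|)%N ->
  wt \in quant_codebook -> is_channel wt.
Proof. by move=> Y_gt0 /mapP[k _ ->]; exact: quant_channel_is_channel. Qed.

Lemma quant_index_mem w : quant_channel (quant_index w) \in quant_codebook.
Proof. by apply: map_f; rewrite mem_enum. Qed.

End quantization.

(* [2 ^ eps >= 1 + eps / 2], so it suffices that [eps K >= 2 m], which
   [K > 4 m ^ 2 / eps - 1] ensures. *)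
Lemma quant_level_le (R : realType) (m eps : R) : 2 <= m -> 0 < eps -> eps < 1 ->
  (Num.truncn (4 * m ^+ 2 / eps))%:R + m <=
  pow2 eps * (Num.truncn (4 * m ^+ 2 / eps))%:R.
Proof.
move=> m_ge2 eps_gt0 eps_lt1; set K : R := _%:R.
have K_gt : 4 * m ^+ 2 < (K + 1) * eps by rewrite -ltr_pdivrMr // natr1 truncnS_gt.
have K_ge0 : 0 <= K by rewrite ler0n.
have pow2_ge : 1 + eps / 2 <= pow2 eps.
  apply: le_trans (pow2_ge1Dx eps); rewrite lerD2l ler_pM2l //.
  by rewrite invf_ple ?posrE ?ln2_gt0 ?invf_ln2_le2.
have : (1 + eps / 2) * K <= pow2 eps * K by rewrite ler_wpM2r.
nra.
Qed.

Lemma log2_card_ffun (R : realType) (Y : finType) n : (0 < #|Y|)%N ->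
  log2 (#|{ffun 'I_n -> Y}|%:R : R) = n%:R * log2 #|Y|%:R.
Proof.
move=> Y_gt0; rewrite card_ffun card_ord natrX /log2 lnXn ?ltr0n //.
by rewrite -[ln _ *+ n]mulr_natl mulrA.
Qed.

Unset Implicit Arguments.

Theorem theorem13 (R : realType) (X Y : finType) (n : nat) (eps : R) :
  (27 <= n)%N -> (2 <= #|X|)%N -> (2 <= #|Y|)%N ->
  (4 * #|X|%:R * #|Y|%:R / n%:R) * log2 n%:R < eps -> eps < 1 ->
  exists Pt : seq (X -> Y -> R),
    (forall wt, wt \in Pt -> is_channel wt) /\
    ((size Pt)%:R : R) <= (#|Y|%:R * (1 + ((Num.floor (4 * #|Y|%:R ^+ 2 / eps : R))%:~R : R)))
                      ^+ (#|X| * #|Y|) /\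
    forall (TM : countType) (p : TM -> {ffun 'I_n -> X} -> R),
      is_joint_pmf p ->
      forall w : X -> Y -> R, is_channel w ->
        exists2 wt, wt \in Pt &
          forall delta alpha : R, 0 < delta -> 0 < alpha ->
            (prob_dev p wt (n%:R * delta) < (pow2 (- (n%:R * alpha)))%:E)%E ->
            let s := pow2 (- (n%:R * eps)) + pow2 (- (n%:R * (alpha - eps))) in
            let dt := (2 + s) * (delta + eps)
                      + s * (log2 #|Y|%:R - 2 / n%:R * log2 s) in
            (prob_dev p w (n%:R * dt) < s%:E)%E.
Proof.
move=> n_ge27 X_ge2 Y_ge2 eps_gt eps_lt1.
have Y_gt0 : (0 < #|Y|)%N by exact: leq_trans Y_ge2.
have n_gt0 : (0 : R) < n%:R by rewrite ltr0n (leq_trans _ n_ge27).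
have [eps_gt0 n_eps_ge2] : 0 < eps /\ 2 <= n%:R * eps.
  have log2_n_ge1 : 1 <= log2 (n%:R : R).
    rewrite /log2 ler_pdivlMr ?ln2_gt0 // mul1r.
    by rewrite ler_ln ?posrE ?ler_nat ?(leq_trans _ n_ge27).
  have XY_ge4 : 4 <= #|X|%:R * (#|Y|%:R : R) by rewrite -natrM ler_nat (@leq_mul 2 2).
  rewrite mulrAC ltr_pdivrMr // in eps_gt; split; nra.
set K := Num.truncn (4 * #|Y|%:R ^+ 2 / eps).
exists (quant_codebook R X Y K); split; [|split].
- by move=> wt; exact: quant_codebook_channel.
- have x_ge0 : (0 : R) <= 4 * #|Y|%:R ^+ 2 / eps by rewrite divr_ge0 // ltW.
  have K_floor : ((Num.floor (4 * #|Y|%:R ^+ 2 / eps))%:~R : R) = K%:R.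
    by rewrite /K truncn_floor x_ge0 natr_absz ger0_norm // floor_ge0.
  rewrite size_quant_codebook natrX K_floor -natr1 addrC.
  by rewrite lerXn2r ?nnegrE ?ler_peMl ?mulr_ge0 ?addr_ge0 // ler1n.
move=> TM p hp w hw; exists (quant_channel R (quant_index K w)).
  exact: quant_index_mem.
move=> delta alpha delta_gt0 _ dev_lt; cbv zeta.
set s := pow2 _ + pow2 _.
have -> : n%:R * ((2 + s) * (delta + eps) + s * (log2 #|Y|%:R - 2 / n%:R * log2 s)) =
    (2 + s) * (n%:R * (delta + eps)) +
    s * (log2 #|{ffun 'I_n -> Y}|%:R - 2 * log2 s).
  by rewrite log2_card_ffun //; field; rewrite gt_eqF.
apply: (prob_dev_perturb hp Y_gt0 hw (quant_channel_is_channel R _ Y_gt0) delta_gt0 _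
  dev_lt n_eps_ge2).
apply: channel_le_quant => //; first exact: ltW (pow2_gt0 _).
by apply: quant_level_le; rewrite ?ler_nat.
Qed.
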